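(* Let $n\ge1$ and $\vec p,\vec q\in[0,1]^n$. Let $I=\{i\in\{1,\dots,n\}:p_i\ge q_i\}$ and $J=\{1,\dots,n\}\setminus I$, and let $\vec p_I,\vec p_J,\vec q_I,\vec q_J$ be the corresponding subsequences of $\vec p,\vec q$. Then $$\mathrm{TV}(\mathrm{Ber}(\vec p),\mathrm{Ber}(\vec q))\ge\max\big(\mathrm{TV}(\mathrm{Ber}(\vec p_I),\mathrm{Ber}(\vec q_I)),\ \mathrm{TV}(\mathrm{Ber}(\vec p_J),\mathrm{Ber}(\vec q_J))\big)\ge\frac1{12}\max\big(\Phi(\vec p_I,\vec q_I),\Phi(\vec q_J,\vec p_J)\big).$$
   Context: For $\vec r=(r_1,\dots,r_m)\in[0,1]^m$, $\mathrm{Ber}(\vec r)=\mathrm{Ber}(r_1)\otimes\cdots\otimes\mathrm{Ber}(r_m)$ is the product Bernoulli measure on $\{0,1\}^m$. $\mathrm{TV}(P,Q)=\frac12\sum_\omega|P(\omega)-Q(\omega)|$ is the total variation distance. For $\vec a,\vec b\in[0,1]^m$, $\Phi(\vec a,\vec b)=\min\big(1,\Delta/\sqrt{\sigma_{\vec a}^2+1}\big)$ where $\Delta=\sum_{i}|a_i-b_i|$ and $\sigma_{\vec a}^2=\sum_i a_i(1-a_i)$. If $I$ or $J$ is empty, the corresponding TV and $\Phi$ terms are $0$. *)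

From HB Require Import structures.
From mathcomp Require Import all_boot all_order all_algebra.
From mathcomp Require Import reals.

Import Order.TTheory GRing.Theory Num.Theory.
Local Open Scope ring_scope.

Definition ber {R : realType} (m : nat) (r : seq R) (w : {ffun 'I_m -> bool}) : R :=
  \prod_(i < m) (if w i then r`_i else 1 - r`_i).

(* Total variation distance between Ber(a) and Ber(b), where a, b have length
   m := size a (b is assumed to have the same length). *)
Definition TVber {R : realType} (a b : seq R) : R :=
  2^-1 * \sum_(w : {ffun 'I_(size a) -> bool})
            `|ber (size a) a w - ber (size a) b w|.

Definition Delta {R : realType} (a b : seq R) : R :=
  \sum_(i < size a) `|a`_i - b`_i|.
Definition sigma2 {R : realType} (a : seq R) : R :=
  \sum_(i < size a) a`_i * (1 - a`_i).
Definition Phi {R : realType} (a b : seq R) : R :=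
  Num.min 1 (Delta a b / Num.sqrt (sigma2 a + 1)).

From HB Require Import structures.
From mathcomp Require Import all_boot all_order all_algebra.
From mathcomp Require Import reals ring lra.
Import Order.TTheory GRing.Theory Num.Theory.
Local Open Scope ring_scope.

(* For test functions 0 <= f <= 1 we have |E_a f - E_b f| <= TV(Ber a, Ber b),
   with equality for the indicator of {Ber a >= Ber b}.  Restricting to the
   coordinates in I or J is such a test, which gives the first inequality.

   For the second one, p >= q on I and q > p on J, so it suffices to treat
   a >= b coordinatewise.  Test with g(S), where S is the number of ones and g
   the linear ramp of width 2d+1 centred at t = (E_a S + E_b S - 1)/2, clamped
   to [0,1]; then g(u+1) - g(u) >= k (1 - (u-t)^2/d^2) with k = 1/(2d+1).
   Switching the coordinates from b to a one at a time,
     E_a g(S) - E_b g(S) = sum_i (a_i - b_i) E_{H_i}[g(T+1) - g(T)],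
   where under the i-th hybrid H_i the count T of the other coordinates has
   mean in [E_b S - 1, E_a S] and variance at most sigma_a^2 + Delta, because
   x(1-x) is 1-Lipschitz on [0,1].  Taking d = 3 max(Delta, sqrt(sigma_a^2+1))
   the gap is at least 2 k Delta / 3 >= Phi / 12. *)

Section BernoulliExpectation.
Context {R : realType}.
Implicit Types (a b : seq R) (h : seq bool -> R).

Fixpoint Eber a h : R :=
  if a is x :: a' then
    x * Eber a' (fun l => h (true :: l)) + (1 - x) * Eber a' (fun l => h (false :: l))
  else h [::].

Lemma Eber_ext a h1 h2 : h1 =1 h2 -> Eber a h1 = Eber a h2.
Proof.
elim: a h1 h2 => [|x a IH] h1 h2 eq_h /=; first exact: eq_h.
by congr (_ * _ + _ * _); apply: IH => l; apply: eq_h.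
Qed.

Lemma Eber_const a c : Eber a (fun _ => c) = c.
Proof. by elim: a => //= x a ->; ring. Qed.

Lemma Eber_sub a h1 h2 : Eber a (fun l => h1 l - h2 l) = Eber a h1 - Eber a h2.
Proof.
elim: a h1 h2 => [|x a IH] h1 h2 //=.
by rewrite (IH (fun l => h1 (true :: l))) (IH (fun l => h1 (false :: l))); ring.
Qed.

Lemma Eber_affine a (alpha beta : R) h :
  Eber a (fun l => alpha * h l + beta) = alpha * Eber a h + beta.
Proof.
elim: a h => [|x a IH] h //=.
by rewrite (IH (fun l => h (true :: l))) (IH (fun l => h (false :: l))); ring.
Qed.

Lemma Eber_le {a h1 h2} :
  all (fun x => 0 <= x <= 1) a -> (forall l, h1 l <= h2 l) -> Eber a h1 <= Eber a h2.
Proof.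
elim: a h1 h2 => [|x a IH] h1 h2 /=; first by move=> _; apply.
case/andP => /andP [x_ge0 x_le1] a01 le_h.
by apply: lerD; apply: ler_wpM2l; rewrite ?subr_ge0 //; apply: IH.
Qed.

Lemma Eber_mask (m : bitseq) a h : Eber (mask m a) h = Eber a (fun l => h (mask m l)).
Proof.
elim: a m h => [|x a IH] [|[] m] h //=; rewrite ?Eber_const; try ring.
- by rewrite IH; congr (_ * _ + _ * _); apply: IH.
- by rewrite !IH; ring.
Qed.

Definition fcons {k} (c : bool) (w : {ffun 'I_k -> bool}) : {ffun 'I_k.+1 -> bool} :=
  [ffun i => if unlift ord0 i is Some j then w j else c].

Lemma sum_ffun_recl k (F : {ffun 'I_k.+1 -> bool} -> R) :
  \sum_w F w = \sum_(c : bool) \sum_(w : {ffun 'I_k -> bool}) F (fcons c w).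
Proof.
rewrite pair_big /= (reindex (fun cw => fcons cw.1 cw.2)) //=.
exists (fun w : {ffun 'I_k.+1 -> bool} => (w ord0, [ffun j => w (lift ord0 j)])).
  move=> [c w] _ /=; congr (_, _); first by rewrite ffunE unlift_none.
  by apply/ffunP => j; rewrite !ffunE liftK.
move=> w _; apply/ffunP => i; rewrite ffunE.
by case: (unliftP ord0 i) => [j ->|->]; rewrite ?ffunE.
Qed.

Lemma codom_fcons k (c : bool) (w : {ffun 'I_k -> bool}) : codom (fcons c w) = c :: codom w.
Proof.
rewrite !codomE enum_ordSl /= ffunE unlift_none -map_comp.
by congr (_ :: _); apply: eq_map => j /=; rewrite ffunE liftK.
Qed.

Lemma ber_fcons x a (c : bool) (w : {ffun 'I_(size a) -> bool}) :
  ber (size a).+1 (x :: a) (fcons c w) = (if c then x else 1 - x) * ber (size a) a w.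
Proof.
rewrite /ber big_ord_recl ffunE unlift_none; congr (_ * _).
by apply: eq_bigr => i _; rewrite ffunE liftK.
Qed.

Lemma Eber_ffun {k a} h : size a = k ->
  \sum_(w : {ffun 'I_k -> bool}) h (codom w) * ber k a w = Eber a h.
Proof.
move=> <-; elim: a h => [|x a IH] h /=.
  rewrite (eq_bigr (fun _ => h [::])) => [|w _]; last first.
    by rewrite /ber big_ord0 mulr1 codomE enum_ord0.
  by rewrite sumr_const card_ffun !card_ord mulr1n.
rewrite sum_ffun_recl big_bool -(IH (fun l => h (true :: l))) -IH !mulr_sumr.
by congr (_ + _); apply: eq_bigr => w _; rewrite codom_fcons ber_fcons /=; ring.
Qed.

Lemma sum_ber {k a} : size a = k -> \sum_(w : {ffun 'I_k -> bool}) ber k a w = 1.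
Proof.
move=> sa; rewrite -(Eber_const a 1) -(Eber_ffun _ sa).
by apply: eq_bigr => w _; rewrite mul1r.
Qed.

Lemma Eber_diffE {a b} h : size b = size a ->
  Eber a h - Eber b h = \sum_(w : {ffun 'I_(size a) -> bool})
                          h (codom w) * (ber (size a) a w - ber (size a) b w).
Proof.
move=> sb; rewrite -(Eber_ffun h (erefl (size a))) -(Eber_ffun h sb) -sumrB.
by apply: eq_bigr => w _; rewrite mulrBr.
Qed.

Lemma sum_ber_diff {a b} : size b = size a ->
  \sum_(w : {ffun 'I_(size a) -> bool}) (ber (size a) a w - ber (size a) b w) = 0.
Proof. by move=> sb; rewrite sumrB !sum_ber ?subrr. Qed.

Lemma TVberC {a b} : size b = size a -> TVber b a = TVber a b.
Proof.
by move=> sb; rewrite /TVber sb; congr (_ * _); apply: eq_bigr => w _; rewrite distrC.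
Qed.

Lemma Eber_test_le_TVber {a b} h : size b = size a -> (forall l, 0 <= h l <= 1) ->
  `|Eber a h - Eber b h| <= TVber a b.
Proof.
move=> sb h01; rewrite Eber_diffE //.
set d := fun w => ber (size a) a w - ber (size a) b w.
(* Centring the test at 1/2 costs nothing because the weights d sum to 0. *)
have -> : \sum_(w : {ffun 'I_(size a) -> bool}) h (codom w) * d w =
    \sum_(w : {ffun 'I_(size a) -> bool}) (h (codom w) - 2^-1) * d w +
    2^-1 * \sum_(w : {ffun 'I_(size a) -> bool}) d w.
  by rewrite mulr_sumr -big_split; apply: eq_bigr => w _ /=; ring.
rewrite sum_ber_diff // mulr0 addr0 /TVber mulr_sumr.
apply: le_trans (ler_norm_sum _ _ _) _; apply: ler_sum => w _.
rewrite normrM; apply: ler_wpM2r => //; rewrite ler_norml.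
by case/andP: (h01 (codom w)) => h0 h1; apply/andP; split; lra.
Qed.

Definition ffun_of_seq k (l : seq bool) : {ffun 'I_k -> bool} :=
  [ffun i : 'I_k => nth false l i].

Lemma codomK k : cancel (fun w : {ffun 'I_k -> bool} => codom w) (ffun_of_seq k).
Proof.
move=> w; apply/ffunP => i.
by rewrite ffunE codomE (nth_map i) ?size_enum_ord // nth_ord_enum.
Qed.

Lemma TVber_attained {a b} : size b = size a ->
  exists2 h, (forall l, 0 <= h l <= 1) & TVber a b = Eber a h - Eber b h.
Proof.
move=> sb; pose w_ l := ffun_of_seq (size a) l.
exists (fun l => if ber (size a) b (w_ l) <= ber (size a) a (w_ l) then 1 else 0).
  by move=> l; case: ifP; rewrite ?lexx ?ler01.
have -> : TVber a b = 2^-1 * \sum_(w : {ffun 'I_(size a) -> bool})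
    (`|ber (size a) a w - ber (size a) b w| + (ber (size a) a w - ber (size a) b w)).
  by rewrite big_split mulrDr sum_ber_diff // mulr0 addr0.
rewrite Eber_diffE // mulr_sumr; apply: eq_bigr => w _.
by rewrite /w_ codomK; case: lerP => _; field.
Qed.

Lemma TVber_mask (m : bitseq) a b : size b = size a -> size m = size a ->
  TVber (mask m a) (mask m b) <= TVber a b.
Proof.
move=> sb sm; have smb : size (mask m b) = size (mask m a) by rewrite !size_mask ?sb.
have [h h01 ->] := TVber_attained smb.
rewrite !Eber_mask; apply: le_trans (Eber_test_le_TVber _ sb _); first exact: ler_norm.
by move=> l; apply: h01.
Qed.

End BernoulliExpectation.

Section HybridArgument.
Context {R : realType}.
Implicit Types (a b : seq R).

Definition ones (l : seq bool) : R := (count id l)%:R.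

Definition mean a : R := \sum_(x <- a) x.

(* The coordinates other than i in the i-th step of switching Ber(b) into
   Ber(a): those before i come from b, those after i from a. *)
Definition hybrid a b i := take i b ++ drop i.+1 a.

Definition dominates a b := all2 (fun x y => [&& 0 <= y, y <= x & x <= 1]) a b.

Lemma mean_cons x a : mean (x :: a) = x + mean a.
Proof. exact: big_cons. Qed.

Lemma sigma2_cons x a : sigma2 (x :: a) = x * (1 - x) + sigma2 a.
Proof. by rewrite /sigma2 big_ord_recl. Qed.

Lemma Delta_cons x y a b : Delta (x :: a) (y :: b) = `|x - y| + Delta a b.
Proof. by rewrite /Delta big_ord_recl. Qed.

Lemma hybrid_cons0 x y a b : hybrid (x :: a) (y :: b) 0 = a.
Proof. exact: drop0. Qed.

Lemma hybrid_consS x y a b i : hybrid (x :: a) (y :: b) i.+1 = y :: hybrid a b i.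
Proof. by []. Qed.

Lemma Eber_ones_cons x a (F : R -> R) :
  Eber (x :: a) (fun l => F (ones l)) =
  x * Eber a (fun l => F (ones l + 1)) + (1 - x) * Eber a (fun l => F (ones l)).
Proof.
by congr (_ * _ + _ * _); apply: Eber_ext => l; rewrite /ones /= natrD addrC ?add0r.
Qed.

Lemma Eber_ones_sqr a u :
  Eber a (fun l => (ones l - u) ^+ 2) = (mean a - u) ^+ 2 + sigma2 a.
Proof.
elim: a u => [|x a IH] u.
  by rewrite /= /ones /mean /sigma2 big_nil big_ord0 addr0.
rewrite (Eber_ones_cons x a (fun v => (v - u) ^+ 2)) IH.
rewrite (Eber_ext _ _ (fun l => (ones l - (u - 1)) ^+ 2)) => [|l]; last first.
  by congr (_ ^+ 2); ring.
by rewrite IH sigma2_cons mean_cons; ring.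
Qed.

Lemma Eber_ones_hybrid {a b} (F : R -> R) : size b = size a ->
  Eber a (fun l => F (ones l)) - Eber b (fun l => F (ones l)) =
  \sum_(i < size a) (a`_i - b`_i) *
     Eber (hybrid a b i) (fun l => F (ones l + 1) - F (ones l)).
Proof.
elim: a b F => [|x a IH] [|y b] F // => [_|[sb]]; first by rewrite big_ord0 subrr.
rewrite big_ord_recl (Eber_ones_cons x) (Eber_ones_cons y) Eber_sub.
under eq_bigr => i _ do
  rewrite lift0 hybrid_consS (Eber_ones_cons y _ (fun v => F (v + 1) - F v)) /=
          mulrDr mulrCA [(a`_i - b`_i) * ((1 - y) * _)]mulrCA.
rewrite big_split -!mulr_sumr -(IH _ (fun v => F (v + 1))) // -IH //=.
by rewrite hybrid_cons0; ring.
Qed.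

Lemma dominates_size {a b} : dominates a b -> size b = size a.
Proof. by elim: a b => [|x a IH] [|y b] //= /andP [_ /IH ->]. Qed.

Lemma dominates_nth {a b} : dominates a b -> forall i, b`_i <= a`_i.
Proof.
elim: a b => [|x a IH] [|y b] //=.
by case/andP => /and3P [_ le_yx _] /IH le_ba [|i] /=.
Qed.

Lemma dominates_all01 {a b} : dominates a b -> all (fun x => 0 <= x <= 1) a.
Proof.
elim: a b => [|x a IH] [|y b] //= /andP [/and3P [y_ge0 le_yx ->] /IH ->].
by rewrite (le_trans y_ge0 le_yx).
Qed.

Lemma dominates_mean {a b} : dominates a b -> mean a - mean b = Delta a b.
Proof.
elim: a b => [|x a IH] [|y b] //=; first by rewrite /mean /Delta big_nil big_ord0 subrr.
case/andP => /and3P [_ le_yx _] /IH mean_ab.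
by rewrite Delta_cons -mean_ab !mean_cons ger0_norm ?subr_ge0 //; ring.
Qed.

Lemma dominates_sigma2_ge0 {a b} : dominates a b -> 0 <= sigma2 a.
Proof.
elim: a b => [|x a IH] [|y b] //=; first by rewrite /sigma2 big_ord0.
case/andP => /and3P [y_ge0 le_yx x_le1] /IH sa_ge0; rewrite sigma2_cons.
by apply: addr_ge0 => //; apply: mulr_ge0; [exact: le_trans le_yx | rewrite subr_ge0].
Qed.

Lemma hybrid_moments {a b} i : dominates a b ->
  [/\ all (fun z => 0 <= z <= 1) (hybrid a b i),
      mean b - 1 <= mean (hybrid a b i) <= mean a
    & sigma2 (hybrid a b i) <= sigma2 a + (mean a - mean b)].
Proof.
elim: a b i => [|x a IH] [|y b] // i.
  by rewrite /hybrid /mean /sigma2 /= big_nil big_ord0 => _; split => //; lra.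
case/andP => /and3P [y_ge0 le_yx x_le1] dom_ab.
have x_ge0 := le_trans y_ge0 le_yx.
have le_mean : mean b <= mean a.
  by rewrite -subr_ge0 (dominates_mean dom_ab); apply: sumr_ge0 => j _.
have sa_ge0 := dominates_sigma2_ge0 dom_ab.
have var_yx : y * (1 - y) <= x * (1 - x) + (x - y) by nra.
rewrite !mean_cons sigma2_cons; case: i => [|i].
  rewrite hybrid_cons0; split; first exact: dominates_all01 dom_ab.
    by apply/andP; split; lra.
  by nra.
have [h01 /andP [lo_h hi_h] var_h] := IH b i dom_ab.
rewrite hybrid_consS /= mean_cons sigma2_cons y_ge0 (le_trans le_yx x_le1) h01.
by split=> //; [apply/andP; split|]; lra.
Qed.

Lemma Eber_ones_gap {a b} (F : R -> R) (k K : R) : dominates a b -> 0 <= K ->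
  (forall u, k - K * (u - (mean a + mean b - 1) / 2) ^+ 2 <= F (u + 1) - F u) ->
  Delta a b * (k - K * (((Delta a b + 1) / 2) ^+ 2 + sigma2 a + Delta a b)) <=
  Eber a (fun l => F (ones l)) - Eber b (fun l => F (ones l)).
Proof.
move=> dom_ab K_ge0 incrF; set t := (_ + _ - 1) / 2 in incrF.
rewrite Eber_ones_hybrid ?(dominates_size dom_ab) //.
rewrite {1}/Delta mulr_suml; apply: ler_sum => i _.
have le_ba := dominates_nth dom_ab i.
rewrite ger0_norm ?subr_ge0 //; apply: ler_wpM2l; first by rewrite subr_ge0.
have [h01 /andP [lo_h hi_h] var_h] := hybrid_moments i dom_ab.
apply: le_trans (Eber_le h01 (fun l => incrF (ones l))).
rewrite (Eber_ext _ _ (fun l => - K * (ones l - t) ^+ 2 + k)) => [|l]; last by ring.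
rewrite Eber_affine Eber_ones_sqr -(dominates_mean dom_ab).
have : (mean (hybrid a b i) - t) ^+ 2 <= ((mean a - mean b + 1) / 2) ^+ 2.
  by rewrite /t; nra.
by nra.
Qed.

End HybridArgument.

Section RampTest.
Context {R : realType}.
Implicit Types (a b : seq R) (t d u v w : R).

Definition clamp01 v : R := Num.min 1 (Num.max 0 v).

Lemma clamp01_ge0_le1 v : 0 <= clamp01 v <= 1.
Proof. by rewrite le_min ge_min lexx ler01 le_max lexx. Qed.

Lemma clamp01_id v : 0 <= v <= 1 -> clamp01 v = v.
Proof. by case/andP => v_ge0 v_le1; rewrite /clamp01 (max_r v_ge0) (min_r v_le1). Qed.

Lemma clamp01_homo : {homo clamp01 : v w / v <= w}.
Proof. by move=> v w le_vw; apply: le_min2 => //; apply: le_max2. Qed.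

Definition ramp t d u : R := clamp01 ((u - t + d) / (2 * d + 1)).

Lemma ramp_increment t d u : 0 < d ->
  (2 * d + 1)^-1 - (2 * d + 1)^-1 / d ^+ 2 * (u - t) ^+ 2 <= ramp t d (u + 1) - ramp t d u.
Proof.
move=> d_gt0; have den_gt0 : 0 < 2 * d + 1 by lra.
have slope_ge0 : 0 <= (2 * d + 1)^-1 / d ^+ 2 * (u - t) ^+ 2.
  by rewrite mulr_ge0 ?divr_ge0 ?invr_ge0 ?sqr_ge0 ?ltW.
have [near|far] := lerP ((u - t) ^+ 2) (d ^+ 2).
  have [lo hi] : - d <= u - t /\ u - t <= d by split; nra.
  have unit_frac v : 0 <= v <= 2 * d + 1 -> 0 <= v / (2 * d + 1) <= 1.
    case/andP=> v_ge0 v_le; rewrite divr_ge0 ?(ltW den_gt0) //=.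
    by rewrite ler_pdivrMr // mul1r.
  rewrite /ramp !clamp01_id ?unit_frac //; last 2 first.
  - by apply/andP; split; lra.
  - by apply/andP; split; lra.
  rewrite -mulrBl (_ : u + 1 - t + d - (u - t + d) = 1); last by ring.
  by rewrite mul1r; lra.
have : (2 * d + 1)^-1 <= (2 * d + 1)^-1 / d ^+ 2 * (u - t) ^+ 2.
  rewrite -mulrA ler_pMr ?invr_gt0 // mulrC ler_pdivlMr ?exprn_gt0 // mul1r.
  exact: ltW.
have : ramp t d u <= ramp t d (u + 1).
  by apply/clamp01_homo/ler_wpM2r; [rewrite invr_ge0; lra | lra].
lra.
Qed.

Lemma Phi_le_Eber_gap {a b} : dominates a b ->
  exists2 h, (forall l, 0 <= h l <= 1) & 12^-1 * Phi a b <= Eber a h - Eber b h.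
Proof.
move=> dom_ab; set D := Delta a b; set s := sigma2 a.
set M := Num.max D (Num.sqrt (s + 1)); set d := 3 * M; set k := (2 * d + 1)^-1.
have D_ge0 : 0 <= D by apply: sumr_ge0 => i _.
have s_ge0 : 0 <= s := dominates_sigma2_ge0 dom_ab.
have r_ge1 : 1 <= Num.sqrt (s + 1) by rewrite -{1}sqrtr1 ler_sqrt; lra.
have M_ge1 : 1 <= M by rewrite le_max r_ge1 orbT.
have s1_le_M2 : s + 1 <= M ^+ 2.
  rewrite -(sqr_sqrtr (_ : 0 <= s + 1)) ?addr_ge0 //.
  by rewrite ler_sqr ?nnegrE ?sqrtr_ge0 ?le_max ?lexx ?orbT //; lra.
have D_le_M : D <= M by rewrite le_max lexx.
exists (fun l => ramp ((mean a + mean b - 1) / 2) d (ones l)).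
  by move=> l; exact: clamp01_ge0_le1.
have d_gt0 : 0 < d by rewrite /d; lra.
have k_gt0 : 0 < k by rewrite invr_gt0; lra.
have K_ge0 : 0 <= k / d ^+ 2 by rewrite divr_ge0 ?exprn_ge0 ?ltW.
apply: le_trans (Eber_ones_gap _ _ _ dom_ab K_ge0 (fun u => ramp_increment _ _ u d_gt0)).
rewrite -/D -/s -/k.
have X_le : ((D + 1) / 2) ^+ 2 + s + D <= 3 * M ^+ 2 by nra.
have slope_le : k / d ^+ 2 * (((D + 1) / 2) ^+ 2 + s + D) <= k / 3.
  have -> : k / 3 = k / d ^+ 2 * (3 * M ^+ 2) by rewrite /d; field; lra.
  exact: ler_wpM2l.
have Phi_le : Phi a b <= D / M.
  rewrite /Phi -/D -/s /M; case: (leP D (Num.sqrt (s + 1))) => [_|lt_rD].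
    by rewrite ge_min lexx orbT.
  by rewrite divff ?ge_min ?lexx //; lra.
have : 12^-1 * (D / M) <= D * (2 / 3 * k).
  rewrite mulrCA ler_wpM2l // -subr_ge0.
  have -> : 2 / 3 * k - 12^-1 / M = (2 * M - 1) / (12 * M * (6 * M + 1)).
    by rewrite /k /d; field; lra.
  by rewrite divr_ge0 ?mulr_ge0; lra.
have : D * (2 / 3 * k) <= D * (k - k / d ^+ 2 * (((D + 1) / 2) ^+ 2 + s + D)).
  by apply: ler_wpM2l => //; lra.
lra.
Qed.

Lemma Phi_le_TVber {a b} : dominates a b -> 12^-1 * Phi a b <= TVber a b.
Proof.
move=> dom_ab; have [h h01 le_gap] := Phi_le_Eber_gap dom_ab.
apply: le_trans le_gap _; apply: le_trans (ler_norm _) _.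
exact: Eber_test_le_TVber (dominates_size dom_ab) h01.
Qed.

End RampTest.

Theorem theorem3 (R : realType) (n : nat) (p q : 'I_n -> R) :
  (1 <= n)%N ->
  (forall i, 0 <= p i <= 1) -> (forall i, 0 <= q i <= 1) ->
  let I := [seq i <- enum 'I_n | q i <= p i] in
  let J := [seq i <- enum 'I_n | ~~ (q i <= p i)] in
  let pv := [seq p i | i <- enum 'I_n] in
  let qv := [seq q i | i <- enum 'I_n] in
  let pI := [seq p i | i <- I] in
  let qI := [seq q i | i <- I] in
  let pJ := [seq p i | i <- J] in
  let qJ := [seq q i | i <- J] in
  Num.max (TVber pI qI) (TVber pJ qJ) <= TVber pv qv /\
  12^-1 * Num.max (Phi pI qI) (Phi qJ pJ) <= Num.max (TVber pI qI) (TVber pJ qJ).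
Proof.
move=> _ p01 q01 I J pv qv pI qI pJ qJ.
have maskE (P : pred 'I_n) (f : 'I_n -> R) :
    [seq f i | i <- [seq i <- enum 'I_n | P i]] =
    mask [seq P i | i <- enum 'I_n] [seq f i | i <- enum 'I_n].
  by rewrite filter_mask map_mask.
have dominatesE (P : pred 'I_n) (f g : 'I_n -> R) :
    (forall i, P i -> [&& 0 <= g i, g i <= f i & f i <= 1]) ->
    dominates [seq f i | i <- [seq i <- enum 'I_n | P i]]
              [seq g i | i <- [seq i <- enum 'I_n | P i]].
  move=> Pfg; rewrite /dominates all2E !size_map eqxx zip_map /= all_map.
  by apply/allP => i; rewrite mem_filter => /andP [/Pfg].
split.
  by rewrite ge_max /pI /qI /pJ /qJ !maskE !TVber_mask ?size_map.
have domI : dominates pI qI.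
  apply: dominatesE => i le_qp; case/andP: (p01 i) => _ ->; case/andP: (q01 i) => -> _.
  by rewrite le_qp.
have domJ : dominates qJ pJ.
  apply: dominatesE => i; rewrite -ltNge => lt_pq.
  by case/andP: (p01 i) => -> _; case/andP: (q01 i) => _ ->; rewrite ltW.
rewrite maxr_pMr ?invr_ge0 ?ler0n //; apply: le_max2; first exact: Phi_le_TVber.
by rewrite -TVberC ?(dominates_size domJ) //; apply: Phi_le_TVber.
Qed.
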